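(* Let $k\in\mathbb Z_{\ge1}$. With probability $1-\mathrm{negl}(n)$ over $G\sim G(n,1/2)$ the following holds: for every vertex set $S\subseteq[n]$ of size $k$ and every family $\mathcal C\subseteq\{C:\emptyset\ne C\subseteq S\}$ there exists a vertex $v\notin S$ such that for every $\emptyset\ne C\subseteq S$, we have $C\in\mathcal C$ if and only if the number of vertices that are adjacent to every vertex in $\{v\}\cup C$ is odd.
   Context: $G(n,1/2)$ is the uniform distribution over simple graphs on vertex set $[n]$ (each pair an edge independently with probability $1/2$). A function is negligible ($\mathrm{negl}(n)$) if eventually below $1/p(n)$ in absolute value for every polynomial $p$. *)

From mathcomp Require Import all_boot all_order all_algebra.
Set Implicit Arguments. Unset Strict Implicit. Unset Printing Implicit Defensive.
Import Order.TTheory GRing.Theory Num.Theory.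

(* Simple graphs on vertex set [n] = 'I_n, given by their edge set:
   a set of 2-element subsets of 'I_n. *)
Definition pairs (n : nat) : {set {set 'I_n}} := [set e : {set 'I_n} | #|e| == 2].

Definition is_graph (n : nat) (E : {set {set 'I_n}}) : bool := E \subset pairs n.

Definition adj (n : nat) (E : {set {set 'I_n}}) (u v : 'I_n) : bool :=
  (u != v) && ([set u; v] \in E).

Definition common_nbrs (n : nat) (E : {set {set 'I_n}}) (A : {set 'I_n}) : nat :=
  #|[set w : 'I_n | [forall x in A, adj E w x]]|.

Definition good_graph (k n : nat) (E : {set {set 'I_n}}) : bool :=
  [forall S : {set 'I_n}, (#|S| == k) ==>
   [forall CC : {set {set 'I_n}},
     (CC \subset [set C : {set 'I_n} | (C \subset S) && (C != set0)]) ==>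
     [exists v : 'I_n, (v \notin S) &&
       [forall C : {set 'I_n}, ((C \subset S) && (C != set0)) ==>
          ((C \in CC) == odd (common_nbrs E (v |: C)))]]]].

(* Probability, for G ~ G(n,1/2) (uniform over all simple graphs on [n]),
   that P fails. *)
Definition prob_fail (P : forall n : nat, {set {set 'I_n}} -> bool) (n : nat) : rat :=
  (#|[set E : {set {set 'I_n}} | is_graph E && ~~ P n E]|%:R
    / (2 ^ #|pairs n|)%:R)%R.

(* Negligible: eventually below 1/p(n) in absolute value for every polynomial p
   (with positive leading coefficient, so that 1/p(n) is eventually positive). *)
Definition negligible (f : nat -> rat) : Prop :=
  forall p : {poly rat}, (0 < lead_coef p)%R ->
    exists N : nat, forall n : nat, (N <= n)%N ->
      (`|f n| < (p.[n%:R])^-1)%R.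

From mathcomp Require Import all_boot all_order all_algebra.
From mathcomp Require Import zify ring polyrcf.
Set Implicit Arguments. Unset Strict Implicit. Unset Printing Implicit Defensive.

(* Fix S with #|S| = k and a family CC of nonempty subsets of S.  Split the
   other vertices into "low" ones, in [0, n/2), and "high" ones, in [n/2, n);
   each part has at least N = n/2 - k vertices.  The graph fails for (S, CC)
   only if
   (a) some type X (a nonempty subset of S) is realized by no low vertex,
       i.e. no low vertex u has neighbourhood X inside S; or
   (b) every type is realized by a low vertex, yet no high vertex v encodes CC.
   Each low vertex realizes X independently with probability 2^-k.  For (b),
   fix low witnesses w X of every type X: toggling the edges {v, w X} changes
   the parity of the number of common neighbours of v |: C by the number of
   X >= C whose edge is present, and Moebius inversion over GF(2) provides a
   setting of these edges that makes v encode CC; the high vertices do so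
   independently.  Both events thus have probability at most
   (1 - 2^-(2^k))^N, and the union over the at most n^k * 2^(2^k) * (2^k + 1)
   choices of (S, CC, X) is still negligible.

   Probabilities are counted: independence becomes the product counting lemma
   [block_count] on disjoint blocks of potential edges. *)

Lemma leq_exp_base m n e : m <= n -> m ^ e <= n ^ e.
Proof. by case: e => [|e] // le_mn; rewrite leq_exp2r. Qed.

Lemma card_bigcup_le (T I : finType) (P : pred I) (F : I -> {set T}) :
  #|\bigcup_(i | P i) F i| <= \sum_(i | P i) #|F i|.
Proof.
elim/big_rec2: _ => [|i m U _ le_Um]; first by rewrite cards0.
exact: leq_trans (leq_card_setU _ _).1 (leq_add (leqnn _) le_Um).
Qed.

Lemma card_bigcup_disjoint (T I : finType) (J : {set I}) (D : I -> {set T}) :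
  (forall i j, i \in J -> j \in J -> i != j -> [disjoint D i & D j]) ->
  #|\bigcup_(i in J) D i| = \sum_(i in J) #|D i|.
Proof.
move=> disjD; rewrite -sum1_card big_mkcond /=.
under [RHS]eq_bigr => i _ do rewrite -sum1_card big_mkcond /=.
rewrite [RHS]exchange_big /=; apply: eq_bigr => x _.
case: (boolP (x \in \bigcup_(i in J) D i)) => [/bigcupP [i0 Ji0 Dx]|notDx].
  rewrite (bigD1 i0) //= Dx big1 // => i /andP [Ji ne_i].
  have := disjD _ _ Ji Ji0 ne_i; rewrite disjoint_sym => /disjointFr.
  by move=> /(_ _ Dx) ->.
rewrite big1 // => i Ji; case: ifP => // Dix.
by case/negP: notDx; apply/bigcupP; exists i.
Qed.

(* The sets between C and D form a copy of the powerset of D \ C. *)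
Lemma card_interval (T : finType) (C D : {set T}) : C \subset D ->
  #|[set X : {set T} | (C \subset X) && (X \subset D)]| = 2 ^ #|D :\: C|.
Proof.
move=> sCD; rewrite -card_powerset.
have -> : [set X : {set T} | (C \subset X) && (X \subset D)] =
          (fun Y => Y :|: C) @: powerset (D :\: C).
  apply/setP => X; rewrite inE; apply/andP/imsetP.
    move=> [sCX sXD]; exists (X :\: C); first by rewrite powersetE setSD.
    by rewrite setUC -{1}(setID X C) (setIidPr sCX).
  move=> [Y]; rewrite powersetE => sYDC ->; split; first exact: subsetUr.
  by rewrite subUset sCD andbT (subset_trans sYDC) // subsetDl.
apply: card_in_imset => Y1 Y2; rewrite !powersetE => sY1 sY2 eqY.
have UCK (Y : {set T}) : Y \subset D :\: C -> (Y :|: C) :\: C = Y.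
  move=> sY; rewrite setDUl setDv setU0; apply/setDidPl.
  by apply: disjointWl sY _; rewrite disjoints_subset setDE subsetIr.
by rewrite -(UCK _ sY1) eqY UCK.
Qed.

Lemma card_lt_powerset (T : finType) (D : {set T}) (Q : pred {set T}) (Y0 : {set T}) :
  Y0 \subset D -> ~~ Q Y0 -> #|[set Y : {set T} | (Y \subset D) && Q Y]| < 2 ^ #|D|.
Proof.
move=> sY0D notQ; rewrite -card_powerset; apply: proper_card; apply/properP; split.
  by apply/subsetP => Y; rewrite inE powersetE => /andP [].
by exists Y0; rewrite ?powersetE // inE (negbTE notQ) andbF.
Qed.

(* If x < 2^w, i.e. x / 2^w <= 1 - 2^-w, then x / 2^w <= 1 - 2^-M for M >= w. *)
Lemma lt_pow2_rescale x w M : x < 2 ^ w -> w <= M -> x * 2 ^ M <= (2 ^ M).-1 * 2 ^ w.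
Proof.
move=> lt_x le_wM; have le_pow : 2 ^ w <= 2 ^ M by rewrite leq_exp2l.
have pos : 0 < 2 ^ w by rewrite expn_gt0.
move: lt_x le_pow pos; move: (2 ^ w) (2 ^ M) => a b; nia.
Qed.

(* A bound a/b <= (1 - 2^-d)^J also holds with any smaller exponent N <= J. *)
Lemma geometric_weaken a b d J N : N <= J ->
  a * 2 ^ (d * J) <= b * (2 ^ d).-1 ^ J -> a * 2 ^ (d * N) <= b * (2 ^ d).-1 ^ N.
Proof.
move=> le_NJ; rewrite -(subnKC le_NJ) mulnDr !expnD.
set x := 2 ^ (d * N); set r := 2 ^ (d * (J - N)).
set y := (2 ^ d).-1 ^ N; set r' := (2 ^ d).-1 ^ (J - N).
have le_r : r' <= r by rewrite /r' /r expnM leq_exp_base // leq_pred.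
have pos : 0 < r by rewrite expn_gt0.
move=> le_ab; rewrite -(leq_pmul2r pos) -mulnA.
apply: leq_trans le_ab _; rewrite -!mulnA leq_mul2l leq_mul2l le_r.
by rewrite !orbT.
Qed.

(* Counting version of conditional independence.  A subset E of U is split into
   its parts E :&: D i on pairwise disjoint blocks D i and its part outside all
   blocks.  If a property P of E forces, for every block, the block part to lie
   in a set of "conditional proportion" at most 1 - 2^-d (given the outside
   part), then the proportion of subsets of U satisfying P is at most
   (1 - 2^-d)^#|J|. *)
Section BlockCounting.

Variables (T I : finType) (U : {set T}) (J : {set I}) (D : I -> {set T}).
Hypothesis sub_DU : forall i, i \in J -> D i \subset U.
Hypothesis disj_D : forall i j, i \in J -> j \in J -> i != j -> [disjoint D i & D j].

Let blocks := \bigcup_(j in J) D j.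
Let outside := U :\: blocks.

Lemma card_outside_blocks : #|outside| + \sum_(i in J) #|D i| = #|U|.
Proof.
have sBU : blocks \subset U by apply/bigcupsP.
by rewrite -card_bigcup_disjoint // cardsDS // subnK // subset_leq_card.
Qed.

Variables (P : pred {set T}) (G : {set T} -> I -> {set T} -> bool).
Hypothesis P_blocks : forall E : {set T}, E \subset U -> P E ->
  forall i, i \in J -> G (E :\: blocks) i (E :&: D i).

Let good_part (ER : {set T}) (i : I) : {set {set T}} :=
  [set Y : {set T} | (Y \subset D i) && G ER i Y].

(* E is determined by its outside part and its block parts. *)
Lemma card_le_block_parts :
  #|[set E : {set T} | (E \subset U) && P E]| <=
  \sum_(ER : {set T} | ER \subset outside) \prod_(i in J) #|good_part ER i|.
Proof.
pose split_parts (E : {set T}) : {set T} * {ffun I -> {set T}} :=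
  (E :\: blocks, [ffun i => if i \in J then E :&: D i else set0]).
have split_inj : injective split_parts.
  move=> E1 E2 [eq_out eq_blk]; apply/setP => x.
  case: (boolP (x \in blocks)) => [/bigcupP [i Ji Dx]|notBx].
    have := congr1 (fun f : {ffun I -> {set T}} => x \in f i) eq_blk.
    by rewrite !ffunE Ji !inE Dx !andbT.
  by have := congr1 (fun S : {set T} => x \in S) eq_out; rewrite !inE notBx.
pose parts := [set p : {set T} * {ffun I -> {set T}} |
   (p.1 \subset outside) && (p.2 \in pfamily set0 J (good_part p.1))].
apply: (@leq_trans #|parts|).
  rewrite -(card_imset _ split_inj); apply: subset_leq_card.
  apply/subsetP => p /imsetP [E]; rewrite inE => /andP [sEU PE] ->.
  rewrite inE /= setSD //=; apply/pfamilyP; split.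
    by apply/subsetP => i; rewrite !inE ffunE; case: ifP => // _; rewrite eqxx.
  by move=> i Ji; rewrite ffunE Ji inE subsetIr /=; apply: P_blocks.
rewrite -sum1_card (eq_bigl _ _ (fun p => in_set _ p)) /=.
rewrite -(pair_big_dep (fun ER : {set T} => ER \subset outside)
           (fun ER f => f \in pfamily set0 J (good_part ER)) (fun _ _ => 1)) /=.
apply: leq_sum => ER _.
by rewrite sum1_card card_pfamily foldrE big_map big_enum.
Qed.

Lemma block_count (d : nat) :
  (forall (ER : {set T}) i, ER \subset outside -> i \in J ->
     #|good_part ER i| * 2 ^ d <= (2 ^ d).-1 * 2 ^ #|D i|) ->
  #|[set E : {set T} | (E \subset U) && P E]| * 2 ^ (d * #|J|)
    <= 2 ^ #|U| * (2 ^ d).-1 ^ #|J|.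
Proof.
move=> good_part_small.
apply: leq_trans (leq_mul card_le_block_parts (leqnn _)) _.
rewrite big_distrl /=.
apply: (@leq_trans (\sum_(ER : {set T} | ER \subset outside)
                      (2 ^ d).-1 ^ #|J| * 2 ^ (\sum_(i in J) #|D i|))).
  apply: leq_sum => ER sER.
  rewrite mulnC expnM -prod_nat_const -prod_nat_const -big_split /= expn_sum.
  rewrite -big_split /=; apply: leq_prod => i Ji; rewrite mulnC.
  exact: good_part_small.
rewrite sum_nat_const.
have -> : #|[pred ER : {set T} | ER \subset outside]| = 2 ^ #|outside|.
  by rewrite -card_powerset; apply: eq_card => ER; rewrite powersetE.
by rewrite -card_outside_blocks expnD mulnCA mulnC.
Qed.

End BlockCounting.

(* The one-block case: if, whatever the part outside W, some configuration on
   W avoids G, then at most a proportion 1 - 2^-d of the subsets satisfy P. *)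
Lemma single_block_count (T : finType) (U W : {set T}) (P : pred {set T})
    (G : {set T} -> {set T} -> bool) (d : nat) :
  W \subset U -> #|W| <= d ->
  (forall E : {set T}, E \subset U -> P E -> G (E :\: W) (E :&: W)) ->
  (forall ER : {set T}, ER \subset U :\: W -> exists2 Y0 : {set T}, Y0 \subset W & ~~ G ER Y0) ->
  #|[set E : {set T} | (E \subset U) && P E]| * 2 ^ d <= (2 ^ d).-1 * 2 ^ #|U|.
Proof.
move=> sWU le_Wd P_W avoid.
have sub_W : forall i, i \in [set tt] -> W \subset U by [].
have disj_W : forall i j, i \in [set tt] -> j \in [set tt] -> i != j -> [disjoint W & W].
  by move=> [] [].
have P_blocks : forall E : {set T}, E \subset U -> P E -> forall i, i \in [set tt] ->
    G (E :\: \bigcup_(j in [set tt]) W) (E :&: W).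
  by move=> E sEU PE i _; rewrite big_set1; apply: P_W.
have := @block_count T unit U [set tt] (fun=> W) sub_W disj_W P (fun ER _ Y => G ER Y) P_blocks d.
rewrite cards1 muln1 expn1 big_set1 => bound; rewrite [_ * 2 ^ #|U|]mulnC; apply: bound => ER i sER _.
have [Y0 sY0W notG] := avoid ER sER.
by apply: lt_pow2_rescale => //; apply: card_lt_powerset notG.
Qed.

Definition nonempty_subsets (T : finType) (S : {set T}) : {set {set T}} :=
  [set C : {set T} | (C \subset S) && (C != set0)].

Lemma card_nonempty_subsets (T : finType) (S : {set T}) :
  #|nonempty_subsets S| <= 2 ^ #|S|.
Proof.
rewrite -card_powerset; apply: subset_leq_card; apply/subsetP => X.
by rewrite inE powersetE => /andP [].
Qed.

Lemma odd_sum_odd (I : finType) (P : pred I) (f : I -> nat) :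
  odd (\sum_(i | P i) odd (f i)) = odd (\sum_(i | P i) f i).
Proof.
apply: (big_ind2 (fun a b => odd a = odd b)) => //.
  by move=> a1 b1 a2 b2 eq1 eq2; rewrite !oddD eq1 eq2.
by move=> i _; case: (odd (f i)).
Qed.

Lemma card_nonempty_between (T : finType) (S C D : {set T}) :
  C \in nonempty_subsets S -> D \in nonempty_subsets S -> C \subset D ->
  #|[set X | (X \in nonempty_subsets S) && (C \subset X) && (X \subset D)]|
    = 2 ^ #|D :\: C|.
Proof.
rewrite !inE => /andP [sCS neC] /andP [sDS _] sCD.
rewrite -card_interval //; apply: eq_card => X; rewrite !inE.
case: (boolP (C \subset X)) => sCX; rewrite ?andbF //.
case: (boolP (X \subset D)) => sXD; rewrite ?andbF //.
rewrite (subset_trans sXD sDS) !andbT.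
by apply: contraNneq neC => X0; rewrite -subset0 -X0.
Qed.

(* Moebius inversion over GF(2) for the order "contains" on nonempty subsets
   of S: the upward-sum transform q |-> (X |-> sum_(D >= X) q D) mod 2 is an
   involution, because the number of X with C <= X <= D is odd iff C = D. *)
Lemma upward_sum_involutive (T : finType) (S : {set T}) (q : {set T} -> bool)
    (C : {set T}) : C \in nonempty_subsets S ->
  odd (\sum_(X | (X \in nonempty_subsets S) && (C \subset X))
          odd (\sum_(D | (D \in nonempty_subsets S) && (X \subset D)) q D)) = q C.
Proof.
move=> famC; rewrite odd_sum_odd.
rewrite (exchange_big_dep (fun D => (D \in nonempty_subsets S) && (C \subset D))) /=;
  last by move=> X D /andP [_ sCX] /andP [-> sXD]; rewrite (subset_trans sCX sXD).
have count_X D : (D \in nonempty_subsets S) && (C \subset D) ->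
   \sum_(X | ((X \in nonempty_subsets S) && (C \subset X)) &&
             ((D \in nonempty_subsets S) && (X \subset D))) q D
   = q D * 2 ^ #|D :\: C|.
  move=> /andP [famD sCD]; rewrite -(card_nonempty_between famC famD sCD).
  rewrite mulnC -sum1_card big_distrl /= mul1n.
  by apply: eq_bigl => X; rewrite [in RHS]inE famD.
rewrite (eq_bigr _ count_X) (bigD1 C) /=; last by rewrite famC subxx.
rewrite setDv cards0 muln1 oddD.
have -> : odd (\sum_(D | (D \in nonempty_subsets S) && (C \subset D) && (D != C))
                 q D * 2 ^ #|D :\: C|) = false.
  apply/negbTE; rewrite -dvdn2; apply: dvdn_sum => D /andP [/andP [_ sCD] neDC].
  apply/dvdn_mull/dvdn_exp => //; rewrite card_gt0.
  by apply: contraNneq neDC => /eqP; rewrite setD_eq0 => sDC; rewrite eqEsubset sDC.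
by rewrite addbF; case: (q C).
Qed.

Definition has_type n (E : {set {set 'I_n}}) (S : {set 'I_n}) (u : 'I_n)
    (X : {set 'I_n}) : bool :=
  [forall s in S, adj E u s == (s \in X)].

Definition realizes_types n (E : {set {set 'I_n}}) (S B : {set 'I_n}) : bool :=
  [forall X in nonempty_subsets S, [exists u in B, has_type E S u X]].

Definition encodes n (E : {set {set 'I_n}}) (S : {set 'I_n}) (CC : {set {set 'I_n}})
    (v : 'I_n) : bool :=
  [forall C : {set 'I_n}, ((C \subset S) && (C != set0)) ==>
     ((C \in CC) == odd (common_nbrs E (v |: C)))].

Lemma set2_eq_mem (T : finType) (a b c d : T) :
  [set a; b] = [set c; d] -> (a = c \/ a = d) /\ (b = c \/ b = d).
Proof. by move=> eq_ab; split; apply/set2P; rewrite -eq_ab ?set21 ?set22. Qed.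

Lemma encodes_ext n (E1 E2 : {set {set 'I_n}}) (S : {set 'I_n})
    (CC : {set {set 'I_n}}) (v : 'I_n) :
  (forall u x, (x \in S) || (x == v) -> ([set u; x] \in E1) = ([set u; x] \in E2)) ->
  encodes E1 S CC v = encodes E2 S CC v.
Proof.
move=> eqE; apply: eq_forallb => C.
case: (boolP ((C \subset S) && (C != set0))) => //= /andP [sCS _].
congr (_ == odd _); apply: eq_card => u; rewrite !inE.
apply: eq_forallb => x; case: (boolP (x \in v |: C)) => //= /setU1P vCx.
rewrite /adj eqE //; case: vCx => [->|Cx]; first by rewrite eqxx orbT.
by rewrite (subsetP sCS x Cx).
Qed.

(* Adding the edges {v, w X} for X in Z changes the parity of the number of
   common neighbours of v |: C by the number of X in Z containing C; by
   Moebius inversion Z can be chosen so that v encodes any prescribed CC. *)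
Section Encoding.

Variables (n : nat) (E0 : {set {set 'I_n}}) (S : {set 'I_n}) (v : 'I_n).
Variable w : {set 'I_n} -> 'I_n.
Hypothesis v_notin_S : v \notin S.
Hypothesis w_fresh : forall X, X \in nonempty_subsets S ->
  [&& w X \notin S, w X != v & [set v; w X] \notin E0].
Hypothesis w_type : forall X s, X \in nonempty_subsets S -> s \in S ->
  adj E0 (w X) s = (s \in X).

Let W := w @: nonempty_subsets S.
Let star (Z : {set {set 'I_n}}) := [set [set v; w X] | X in Z].

Lemma witness_inj : {in nonempty_subsets S &, injective w}.
Proof.
move=> X1 X2 famX1 famX2 eqw; apply/setP => s.
case: (boolP (s \in S)) => Ss; first by rewrite -(w_type famX1 Ss) -(w_type famX2 Ss) eqw.
move: famX1 famX2; rewrite !inE => /andP [sX1 _] /andP [sX2 _].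
by apply/idP/idP => Xs; [move: (subsetP sX1 s Xs) | move: (subsetP sX2 s Xs)];
   rewrite (negbTE Ss).
Qed.

Variable Z : {set {set 'I_n}}.
Hypothesis sub_Z : Z \subset nonempty_subsets S.

Let E := E0 :|: star Z.

Lemma mem_star a b : [set a; b] \in star Z ->
  exists2 X, X \in nonempty_subsets S & [set a; b] = [set v; w X].
Proof. by move=> /imsetP [X ZX ->]; exists X => //; apply: (subsetP sub_Z). Qed.

Lemma adj_star_out u x : u \notin W -> (x \in S) || (x == v) -> adj E u x = adj E0 u x.
Proof.
move=> notWu Sx; rewrite /adj inE; case: (boolP (u == x)) => //= neux.
case: (boolP ([set u; x] \in star Z)) => [/mem_star [X famX eqX]|]; last by rewrite orbF.
have /and3P [notSw newv _] := w_fresh famX.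
have [[uv|uw] [xv|xw]] := set2_eq_mem eqX.
- by rewrite uv xv eqxx in neux.
- by move: Sx; rewrite xw (negbTE notSw) /= => /eqP wv; rewrite wv eqxx in newv.
- by case/negP: notWu; rewrite uw imset_f.
- by case/negP: notWu; rewrite uw imset_f.
Qed.

Lemma adj_star_type X x : X \in nonempty_subsets S -> x \in S -> adj E (w X) x = (x \in X).
Proof.
move=> famX Sx; rewrite -w_type // /adj inE; case: (w X == x) => //=.
case: (boolP ([set w X; x] \in star Z)) => [/mem_star [X' famX' eqX]|]; last by rewrite orbF.
have /and3P [notSw' _ _] := w_fresh famX'.
have [_ [xv|xw']] := set2_eq_mem eqX.
- by move: Sx; rewrite xv (negbTE v_notin_S).
- by rewrite -xw' Sx in notSw'.
Qed.

Lemma adj_star_center X : X \in nonempty_subsets S -> adj E (w X) v = (X \in Z).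
Proof.
move=> famX; have /and3P [_ newv notE0] := w_fresh famX.
rewrite /adj inE newv setUC (negbTE notE0) /=; apply/imsetP/idP => [[X' ZX' eqX]|ZX].
  have [_ [wv|eqw]] := set2_eq_mem eqX; first by rewrite wv eqxx in newv.
  by rewrite (witness_inj famX _ eqw) // (subsetP sub_Z).
by exists X.
Qed.

Lemma common_nbrs_star C : C \in nonempty_subsets S ->
  common_nbrs E (v |: C) =
    #|[set u | (u \notin W) && [forall x in v |: C, adj E0 u x]]|
    + \sum_(X | (X \in nonempty_subsets S) && (C \subset X)) (X \in Z).
Proof.
move=> famC; have sCS : C \subset S by move: famC; rewrite inE => /andP [].
set P := [set u | [forall x in v |: C, adj E u x]].
rewrite /common_nbrs -/P -(cardsID W P) addnC; congr (_ + _).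
  apply: eq_card => u; rewrite !inE; case: (boolP (u \in W)) => //= notWu.
  apply: eq_forallb => x; case: (boolP (x \in v |: C)) => //= /setU1P vCx.
  by rewrite adj_star_out //; case: vCx => [->|/(subsetP sCS) ->]; rewrite ?eqxx ?orbT.
have -> : P :&: W = w @: [set X | (X \in Z) && (C \subset X)].
  apply/setP => u; rewrite inE; apply/andP/imsetP.
    move=> [Pu /imsetP [X famX eq_u]]; subst u; exists X => //.
    move: Pu; rewrite inE => /forall_inP Pw.
    rewrite inE -adj_star_center // Pw ?setU11 //=.
    apply/subsetP => x Cx; rewrite -(adj_star_type famX (subsetP sCS x Cx)).
    by apply: Pw; rewrite setU1r.
  move=> [X]; rewrite inE => /andP [ZX sCX] ->.
  have famX := subsetP sub_Z X ZX; split; last exact: imset_f.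
  rewrite inE; apply/forall_inP => x /setU1P [->|Cx]; first by rewrite adj_star_center.
  by rewrite adj_star_type ?(subsetP sCS x Cx) ?(subsetP sCX x Cx).
rewrite card_in_imset; last first.
  by move=> X1 X2; rewrite !inE => /andP [/(subsetP sub_Z) ? _] /andP [/(subsetP sub_Z) ? _];
     apply: witness_inj.
rewrite -sum1_card big_mkcond [RHS]big_mkcond /=; apply: eq_bigr => X _.
rewrite inE; case: (boolP (X \in Z)) => ZX /=; last by case: ifP.
by rewrite (subsetP sub_Z X ZX).
Qed.

End Encoding.

(* Choose Z as the upward-sum transform of the parity corrections needed
   by each C; [upward_sum_involutive] makes the parities come out right. *)
Lemma encoding_exists n (E0 : {set {set 'I_n}}) (S : {set 'I_n}) (CC : {set {set 'I_n}})
  (v : 'I_n) (w : {set 'I_n} -> 'I_n) :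
  v \notin S ->
  (forall X, X \in nonempty_subsets S -> [&& w X \notin S, w X != v & [set v; w X] \notin E0]) ->
  (forall X s, X \in nonempty_subsets S -> s \in S -> adj E0 (w X) s = (s \in X)) ->
  exists2 Y : {set {set 'I_n}},
    Y \subset [set [set v; w X] | X in nonempty_subsets S] & encodes (E0 :|: Y) S CC v.
Proof.
move=> notSv w_fresh w_type.
set W := w @: nonempty_subsets S.
pose base C := #|[set u | (u \notin W) && [forall x in v |: C, adj E0 u x]]|.
pose q C := (C \in CC) (+) odd (base C).
pose Z := [set X in nonempty_subsets S |
             odd (\sum_(D | (D \in nonempty_subsets S) && (X \subset D)) q D)].
have sub_Z : Z \subset nonempty_subsets S by apply/subsetP => X; rewrite inE => /andP [].
exists [set [set v; w X] | X in Z]; first exact: imsetS.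
apply/forall_inP => C famC; have famC' : C \in nonempty_subsets S by rewrite inE.
rewrite (common_nbrs_star notSv w_fresh w_type sub_Z famC') oddD -/W -/(base C).
have -> : \sum_(X | (X \in nonempty_subsets S) && (C \subset X)) (X \in Z) =
          \sum_(X | (X \in nonempty_subsets S) && (C \subset X))
             odd (\sum_(D | (D \in nonempty_subsets S) && (X \subset D)) q D).
  by apply: eq_bigr => X /andP [famX _]; rewrite inE famX.
by rewrite upward_sum_involutive // /q; case: (C \in CC); case: (odd (base C)).
Qed.

Definition edges_to n (u : 'I_n) (B : {set 'I_n}) : {set {set 'I_n}} :=
  [set [set u; x] | x in B].

Lemma mem_edges_to n (u s : 'I_n) (B : {set 'I_n}) :
  u != s -> ([set u; s] \in edges_to u B) = (s \in B).
Proof.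
move=> neus; apply/imsetP/idP => [[x Bx eq_s]|Bs]; last by exists s.
by have [_ [su|->]] := set2_eq_mem eq_s; first by rewrite su eqxx in neus.
Qed.

Lemma edges_to_pairs n (u : 'I_n) (B : {set 'I_n}) :
  u \notin B -> edges_to u B \subset pairs n.
Proof.
move=> notBu; apply/subsetP => e /imsetP [x Bx ->].
have neux : u != x by apply: contraNneq notBu => ->.
by rewrite inE cards2 neux.
Qed.

Lemma card_edges_to n (u : 'I_n) (B : {set 'I_n}) : u \notin B -> #|edges_to u B| = #|B|.
Proof.
move=> notBu; apply: card_in_imset => x y Bx By /set2_eq_mem [_ [xu|//]].
by move: Bx notBu; rewrite xu => ->.
Qed.

Lemma edges_to_disjoint n (A B : {set 'I_n}) (u u' : 'I_n) :
  (forall v, v \in A -> v \notin B) -> u \in A -> u' \in A -> u != u' ->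
  [disjoint edges_to u B & edges_to u' B].
Proof.
move=> notB_A Au Au' neuu'; rewrite -setI_eq0; apply/eqP/setP => e; rewrite !inE.
apply/andP => [[/imsetP [x Bx ->] /imsetP [x' Bx' /set2_eq_mem [[uu'|ux'] _]]]].
  by rewrite uu' eqxx in neuu'.
by move: (notB_A u Au); rewrite ux' Bx'.
Qed.

(* The event that some type X is realized by no vertex of B: each vertex of B
   realizes X independently with probability 2^-#|S| >= 2^-M. *)
Lemma missing_type_bound n (S B X : {set 'I_n}) (M N : nat) :
  (forall u, u \in B -> u \notin S) -> X \subset S -> #|S| <= M -> N <= #|B| ->
  #|[set E : {set {set 'I_n}} |
       (E \subset pairs n) && [forall u in B, ~~ has_type E S u X]]| * 2 ^ (M * N)
    <= 2 ^ #|pairs n| * (2 ^ M).-1 ^ N.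
Proof.
move=> notS_B sXS le_SM le_NB; apply: geometric_weaken le_NB _.
have ne_BS u s : u \in B -> s \in S -> u != s.
  by move=> Bu Ss; apply: contraNneq (notS_B u Bu) => ->.
apply: (@block_count _ _ (pairs n) B (fun u => edges_to u S) _ _ _
          (fun _ u Y => Y != edges_to u X)).
- by move=> u Bu; apply/edges_to_pairs/notS_B.
- by move=> u u' Bu Bu'; apply: (edges_to_disjoint notS_B Bu Bu').
- move=> E sE /forall_inP no_type u Bu; apply/negP => /eqP blockE.
  have := no_type u Bu; apply/negP; rewrite negbK; apply/forall_inP => s Ss.
  rewrite /adj (ne_BS u s Bu Ss) /=.
  have -> : ([set u; s] \in E) = ([set u; s] \in E :&: edges_to u S).
    by rewrite inE mem_edges_to ?ne_BS // Ss andbT.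
  by rewrite blockE mem_edges_to ?ne_BS.
move=> ER u _ Bu; apply: lt_pow2_rescale; last by rewrite card_edges_to ?notS_B.
by apply: (card_lt_powerset (Y0 := edges_to u X)); rewrite ?imsetS ?negbK.
Qed.

Lemma realizes_types_setD n (E F : {set {set 'I_n}}) (S B : {set 'I_n}) :
  (forall x s, s \in S -> [set x; s] \notin F) ->
  realizes_types (E :\: F) S B = realizes_types E S B.
Proof.
move=> away; apply: eq_forallb => X; congr (_ ==> _); apply: eq_existsb => u.
congr (_ && _); apply: eq_forallb => s; case: (boolP (s \in S)) => //= Ss.
by rewrite /adj inE (negbTE (away u s Ss)).
Qed.

(* Conditionally on any edges outside the star from v to B, provided B
   realizes all types over S, the vertex v encodes CC with probability at
   least 2^-M: by [encoding_exists], some choice of the edges from v to the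
   type witnesses works. *)
Lemma encoder_block_bound n (S B : {set 'I_n}) (CC : {set {set 'I_n}}) (v : 'I_n)
    (ER : {set {set 'I_n}}) (M : nat) :
  v \notin S -> v \notin B -> (forall u, u \in B -> u \notin S) ->
  #|nonempty_subsets S| <= M ->
  realizes_types ER S B -> [disjoint ER & edges_to v B] ->
  #|[set Y : {set {set 'I_n}} |
       (Y \subset edges_to v B) && ~~ encodes (ER :|: Y) S CC v]| * 2 ^ M
    <= (2 ^ M).-1 * 2 ^ #|edges_to v B|.
Proof.
move=> notSv notBv notS_B le_famM /forall_inP realized disj_ER.
pose w (X : {set 'I_n}) := odflt v [pick u in B | has_type ER S u X].
have w_spec X : X \in nonempty_subsets S -> (w X \in B) && has_type ER S (w X) X.
  move=> famX; have /existsP [u /andP [Bu typu]] := realized X famX.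
  rewrite /w; case: pickP => [u' /andP [-> ->] //|none].
  by have := none u; rewrite Bu typu.
set Wv := [set [set v; w X] | X in nonempty_subsets S].
have sub_Wv : Wv \subset edges_to v B.
  by apply/subsetP => e /imsetP [X famX ->]; apply: imset_f; case/andP: (w_spec X famX).
apply: (@single_block_count _ _ Wv _ (fun ER' Y => ~~ encodes (ER :|: ER' :|: Y) S CC v)).
- exact: sub_Wv.
- exact: leq_trans (leq_imset_card _ _) le_famM.
- by move=> Y _ /=; rewrite -setUA [_ :|: (Y :&: _)]setUC setID.
move=> ER' sER'; have sER'B : ER' \subset edges_to v B.
  by apply: subset_trans sER' (subsetDl _ _).
have not_ER'_S x s : s \in S -> [set x; s] \notin ER'.
  apply: contraTN => /(subsetP sER'B) /imsetP [u Bu /set2_eq_mem [_ [sv|su]]].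
    by rewrite sv.
  by rewrite su; apply: notS_B.
have w_type X s : X \in nonempty_subsets S -> s \in S ->
    adj (ER :|: ER') (w X) s = (s \in X).
  move=> famX Ss; have /andP [_ /forall_inP typ] := w_spec X famX.
  by rewrite -(eqP (typ s Ss)) /adj inE (negbTE (not_ER'_S _ _ Ss)) orbF.
have w_fresh X : X \in nonempty_subsets S ->
    [&& w X \notin S, w X != v & [set v; w X] \notin ER :|: ER'].
  move=> famX; have /andP [BwX _] := w_spec X famX.
  rewrite notS_B //=; apply/andP; split; first by apply: contraNneq notBv => <-.
  have WvX : [set v; w X] \in Wv by apply: imset_f.
  rewrite inE negb_or; apply/andP; split.
    by rewrite (disjointFl disj_ER) // (subsetP sub_Wv).
  by apply: contraTN WvX => /(subsetP sER'); rewrite inE => /andP [].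
have [Y0 sY0 enc] := encoding_exists CC notSv w_fresh w_type.
by exists Y0; rewrite ?negbK.
Qed.

(* The event that B realizes all types over S but no vertex of A encodes CC:
   the stars from the vertices of A to B are disjoint, and each vertex of A
   fails with conditional probability at most 1 - 2^-M. *)
Lemma no_encoder_bound n (S A B : {set 'I_n}) (CC : {set {set 'I_n}}) (M N : nat) :
  (forall u, u \in B -> u \notin S) -> (forall v, v \in A -> v \notin S) ->
  (forall v, v \in A -> v \notin B) ->
  #|nonempty_subsets S| <= M -> N <= #|A| ->
  #|[set E : {set {set 'I_n}} | (E \subset pairs n) &&
       (realizes_types E S B && [forall v in A, ~~ encodes E S CC v])]| * 2 ^ (M * N)
    <= 2 ^ #|pairs n| * (2 ^ M).-1 ^ N.
Proof.
move=> notS_B notS_A notB_A le_famM le_NA; apply: geometric_weaken le_NA _.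
set stars := \bigcup_(v in A) edges_to v B.
have stars_away x s : s \in S -> [set x; s] \notin stars.
  move=> Ss; apply/bigcupP => [[v Av /imsetP [u Bu /set2_eq_mem [_ [sv|su]]]]].
    by move: (notS_A v Av); rewrite -sv Ss.
  by move: (notS_B u Bu); rewrite -su Ss.
have star_v_only v u : v \in A -> [set u; v] \in stars -> [set u; v] \in edges_to v B.
  move=> Av /bigcupP [v' Av' /imsetP [u' Bu' eq_uv]].
  have [_ [vv'|vu']] := set2_eq_mem eq_uv; last by move: (notB_A v Av); rewrite vu' Bu'.
  by rewrite eq_uv -vv'; apply: imset_f.
apply: (@block_count _ _ (pairs n) A (fun v => edges_to v B) _ _ _
   (fun ER v Y => realizes_types ER S B && ~~ encodes (ER :|: Y) S CC v)).
- by move=> v Av; apply/edges_to_pairs/notB_A.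
- by move=> v v' Av Av'; apply: (edges_to_disjoint notB_A Av Av').
(* Removing the stars keeps the types; v only sees its own star. *)
- move=> E _ /andP [realized /forall_inP no_enc] v Av.
  rewrite realizes_types_setD // realized /=.
  rewrite -(encodes_ext (E1 := E)) ?no_enc // => u x /orP [Sx|/eqP ->].
    have notD : [set u; x] \notin edges_to v B.
      by apply: contra (stars_away u x Sx) => Dx; apply/bigcupP; exists v.
    by rewrite !inE (negbTE (stars_away u x Sx)) (negbTE notD) andbF orbF.
  rewrite !inE; case: (boolP ([set u; v] \in edges_to v B)) => [_|notD].
    by case: ([set u; v] \in E); rewrite ?andbT ?andbF ?orbT ?orbF.
  by rewrite andbF orbF; case: (boolP ([set u; v] \in stars)) => // /(star_v_only _ _ Av);
     rewrite (negbTE notD).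
move=> ER v sER Av; case: (boolP (realizes_types ER S B)) => realized; last first.
  by rewrite (_ : [set Y | _] = set0) ?cards0 //; apply/setP => Y; rewrite !inE andbF.
under eq_finset => Y do rewrite andTb.
apply: encoder_block_bound => //; rewrite ?notS_A ?notB_A //.
rewrite -setI_eq0; apply/eqP/setP => e; rewrite !inE.
apply/andP => [[ERe De]]; move: (subsetP sER e ERe); rewrite inE => /andP [].
by case/negP; apply/bigcupP; exists v.
Qed.

Lemma card_ord_lt n h : h <= n -> #|[set w : 'I_n | w < h]| = h.
Proof.
move=> le_hn; have -> : [set w : 'I_n | w < h] = [set widen_ord le_hn i | i in 'I_h].
  apply/setP => w; rewrite inE; apply/idP/imsetP => [lt_wh|[i _ ->]]; last by rewrite /= ltn_ord.
  by exists (Ordinal lt_wh) => //; apply: val_inj.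
by rewrite card_imset ?card_ord // => i j /(congr1 val) /= /val_inj.
Qed.

Lemma card_ord_ge n h : h <= n -> #|[set w : 'I_n | h <= w]| = n - h.
Proof.
move=> le_hn; have -> : #|[set w : 'I_n | h <= w]| = #|~: [set w : 'I_n | w < h]|.
  by apply: eq_card => w; rewrite !inE leqNgt.
by rewrite cardsCs setCK card_ord card_ord_lt.
Qed.

Section UnionBound.

Variables (n k : nat).

Let h := n./2.
Let N := h - k.
Let M := 2 ^ k.
Let bound := 2 ^ #|pairs n| * (2 ^ M).-1 ^ N.
Let low (S : {set 'I_n}) := [set w : 'I_n | w < h] :\: S.
Let high (S : {set 'I_n}) := [set w : 'I_n | h <= w] :\: S.

Let missing_type (S X : {set 'I_n}) := [set E : {set {set 'I_n}} |
  (E \subset pairs n) && [forall u in low S, ~~ has_type E S u X]].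
Let no_encoder (S : {set 'I_n}) (CC : {set {set 'I_n}}) := [set E : {set {set 'I_n}} |
  (E \subset pairs n) && (realizes_types E S (low S) && [forall v in high S, ~~ encodes E S CC v])].
Let bad (S : {set 'I_n}) (CC : {set {set 'I_n}}) :=
  (\bigcup_(X in nonempty_subsets S) missing_type S X) :|: no_encoder S CC.

Lemma not_good_bad :
  [set E : {set {set 'I_n}} | is_graph E && ~~ good_graph k E] \subset
  \bigcup_(S : {set 'I_n} | #|S| == k) \bigcup_(CC : {set {set 'I_n}} | CC \subset nonempty_subsets S) bad S CC.
Proof.
apply/subsetP => E; rewrite inE => /andP [graphE /forallPn [S]].
have sE : E \subset pairs n := graphE.
rewrite negb_imply => /andP [cardS /forallPn [CC]]; rewrite negb_imply => /andP [sCC no_v].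
apply/bigcupP; exists S => //; apply/bigcupP; exists CC => //.
case: (boolP (realizes_types E S (low S))) => [realized|/forallPn [X]].
  apply/setUP; right; rewrite inE sE realized /=; apply/forall_inP => v.
  rewrite inE => /andP [notSv _]; apply: contra no_v => enc.
  by apply/existsP; exists v; rewrite notSv.
rewrite negb_imply => /andP [famX no_u]; apply/setUP; left; apply/bigcupP; exists X => //.
rewrite inE sE; apply/forall_inP => u lowu; apply: contra no_u => typu.
by apply/existsP; exists u; rewrite lowu.
Qed.

Lemma N_le_low (S : {set 'I_n}) : #|S| = k -> N <= #|low S|.
Proof.
move=> cardS; rewrite cardsD card_ord_lt /h; last by lia.
have : #|[set w : 'I_n | w < n./2] :&: S| <= k by rewrite -cardS subset_leq_card ?subsetIr.
by rewrite /N /h; lia.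
Qed.

Lemma N_le_high (S : {set 'I_n}) : #|S| = k -> N <= #|high S|.
Proof.
move=> cardS; rewrite cardsD card_ord_ge /h; last by lia.
have : #|[set w : 'I_n | n./2 <= w] :&: S| <= k by rewrite -cardS subset_leq_card ?subsetIr.
by rewrite /N /h; lia.
Qed.

(* For fixed S and CC: 2^k events of type (a) and one event of type (b). *)
Lemma card_bad (S : {set 'I_n}) (CC : {set {set 'I_n}}) : #|S| = k -> #|bad S CC| * 2 ^ (M * N) <= (2 ^ k).+1 * bound.
Proof.
move=> cardS; have notS_low u : u \in low S -> u \notin S by rewrite inE => /andP [].
apply: leq_trans (leq_mul (leq_card_setU _ _).1 (leqnn _)) _.
rewrite mulnDl mulSn [bound + _]addnC; apply: leq_add.
  apply: leq_trans (leq_mul (card_bigcup_le _ _) (leqnn _)) _; rewrite big_distrl /=.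
  apply: (@leq_trans (\sum_(X in nonempty_subsets S) bound)).
    apply: leq_sum => X; rewrite inE => /andP [sXS _].
    apply: missing_type_bound => //; last exact: N_le_low.
    by rewrite cardS ltnW // ltn_expl.
  by rewrite sum_nat_const leq_mul2r -cardS card_nonempty_subsets orbT.
apply: no_encoder_bound => //; last exact: N_le_high.
- by move=> v; rewrite inE => /andP [].
- by move=> v; rewrite !inE => /andP [_ h_le]; rewrite ltnNge h_le andbF.
- by rewrite /M -cardS card_nonempty_subsets.
Qed.

(* Summing over the 'C(n, k) sets S and the at most 2^(2^k) families CC. *)
Lemma fail_count :
  #|[set E : {set {set 'I_n}} | is_graph E && ~~ good_graph k E]| * 2 ^ (M * N)
    <= 'C(n, k) * (2 ^ M * (2 ^ k).+1 * bound).
Proof.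
apply: leq_trans (leq_mul (subset_leq_card not_good_bad) (leqnn _)) _.
apply: leq_trans (leq_mul (card_bigcup_le _ _) (leqnn _)) _; rewrite big_distrl /=.
apply: (@leq_trans (\sum_(S : {set 'I_n} | #|S| == k) (2 ^ M * ((2 ^ k).+1 * bound)))).
  apply: leq_sum => S /eqP cardS.
  apply: leq_trans (leq_mul (card_bigcup_le _ _) (leqnn _)) _; rewrite big_distrl /=.
  apply: (@leq_trans (\sum_(CC : {set {set 'I_n}} | CC \subset nonempty_subsets S)
                        ((2 ^ k).+1 * bound))).
    by apply: leq_sum => CC _; apply: card_bad.
  rewrite sum_nat_const leq_mul2r; apply/orP; right.
  have -> : #|[pred CC : {set {set 'I_n}} | CC \subset nonempty_subsets S]|
            = 2 ^ #|nonempty_subsets S|.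
    by rewrite -card_powerset; apply: eq_card => CC; rewrite powersetE.
  by rewrite leq_exp2l // /M -cardS card_nonempty_subsets.
rewrite sum_nat_const -cardsE card_draws card_ord.
by rewrite !mulnA.
Qed.

End UnionBound.

Lemma ffact_le_exp n m : n ^_ m <= n ^ m.
Proof.
elim: m n => [|m IH] n; first by rewrite ffactn0 expn0.
by rewrite ffactnS expnS leq_mul // (leq_trans (IH _)) // leq_exp_base // leq_pred.
Qed.

Lemma exp_le_ffact n m : (n - m) ^ m <= n ^_ m.
Proof.
elim: m => [|m IH]; first by rewrite ffactn0 expn0.
rewrite ffactnSr expnS mulnC leq_mul //; last by lia.
by apply: leq_trans IH; apply: leq_exp_base; lia.
Qed.

Lemma bin_le_exp n k : 'C(n, k) <= n ^ k.
Proof.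
by apply: leq_trans (ffact_le_exp n k); rewrite -bin_ffact leq_pmulr // fact_gt0.
Qed.

Lemma binomial_term_le q t J : J <= t -> 'C(t, J) * q ^ (t - J) <= (q + 1) ^ t.
Proof.
move=> le_Jt; rewrite expnDn (bigD1 (Ordinal (le_Jt : J < t.+1))) //= exp1n muln1.
exact: leq_addr.
Qed.

Lemma poly_lt_shifted_pow c j :
  exists T0, forall t, T0 <= t -> c * (t + 1) ^ j < (t - j.+1) ^ j.+1.
Proof.
exists (j.+1 + j + 2 + c * 2 ^ j) => t le_T0t; set u := t - j.+1.
have le_t1 : t + 1 <= 2 * u by rewrite /u; lia.
apply: (@leq_ltn_trans (c * 2 ^ j * u ^ j)).
  by rewrite -mulnA leq_mul2l -expnMn leq_exp_base ?orbT.
have upos : 0 < u ^ j by rewrite expn_gt0; apply/orP; left; rewrite /u; lia.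
have lt_cu : c * 2 ^ j < u by rewrite /u; lia.
by rewrite expnS ltn_pmul2r.
Qed.

Lemma geometric_beats_poly c j q : 0 < q ->
  exists T0, forall t, T0 <= t -> c * (t + 1) ^ j * q ^ t < (q + 1) ^ t.
Proof.
move=> qpos; set J := j.+1.
have [T0 poly_lt] := poly_lt_shifted_pow (c * q ^ J * J`!) j.
exists (T0 + J) => t le_t; have le_Jt : J <= t by lia.
have qJpos : 0 < q ^ J by rewrite expn_gt0 qpos.
have factpos : 0 < J`! := fact_gt0 J.
rewrite -(ltn_pmul2r qJpos) -(ltn_pmul2r factpos).
apply: (@leq_trans ((t - J) ^ J * q ^ t)).
  have -> : c * (t + 1) ^ j * q ^ t * q ^ J * J`! =
            c * q ^ J * J`! * (t + 1) ^ j * q ^ t by ring.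
  by rewrite ltn_pmul2r ?expn_gt0 ?qpos // poly_lt //; lia.
apply: (@leq_trans ('C(t, J) * J`! * q ^ t)).
  by rewrite leq_mul2r bin_ffact exp_le_ffact orbT.
have -> : q ^ t = q ^ (t - J) * q ^ J by rewrite -expnD subnK.
have -> : 'C(t, J) * J`! * (q ^ (t - J) * q ^ J) =
          'C(t, J) * q ^ (t - J) * (q ^ J * J`!) by ring.
by rewrite -[(q + 1) ^ t * q ^ J * J`!]mulnA leq_mul2r binomial_term_le ?orbT.
Qed.

(* The failure count beats every monomial L * n^d relative to 2^#|pairs n|:
   with N = n/2 - k and q = 2^(2^k) - 1, [fail_count] bounds F * (q+1)^N by
   n^k * K * 2^#|pairs n| * q^N, and n <= (2k+2)(N+1) turns n^(k+d) into a
   polynomial in N, beaten by ((q+1)/q)^N [geometric_beats_poly]. *)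
Lemma fail_beats_monomials k L d : 1 <= k -> exists N0, forall n, N0 <= n ->
  #|[set E : {set {set 'I_n}} | is_graph E && ~~ good_graph k E]| * (L * n ^ d)
    < 2 ^ #|pairs n|.
Proof.
move=> k_ge1; set M := 2 ^ k; set q := (2 ^ M).-1; set K := 2 ^ M * (2 ^ k).+1.
have two_le : 2 <= 2 ^ M by rewrite -{1}(expn1 2) leq_exp2l // expn_gt0.
have q1 : q + 1 = 2 ^ M by rewrite /q; lia.
have qpos : 0 < q by rewrite /q; lia.
have [T0 beat] := geometric_beats_poly (K * L * (2 * k + 2) ^ (k + d)) (k + d) qpos.
exists (2 * (T0 + k)) => n le_n; set N := n./2 - k.
set F := #|_|; set U := #|pairs n|.
have le_nN : n <= (2 * k + 2) * (N + 1) by rewrite /N; nia.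
have := fail_count n k; rewrite -/M -/N -/q -/K -/F -/U expnM => count.
rewrite q1 in beat; have pos : 0 < (2 ^ M) ^ N by rewrite !expn_gt0.
rewrite -(ltn_pmul2r pos).
apply: (@leq_ltn_trans (n ^ k * (K * (2 ^ U * q ^ N)) * (L * n ^ d))).
  rewrite mulnAC leq_mul2r; apply/orP; right.
  by apply: leq_trans count _; rewrite leq_mul2r bin_le_exp orbT.
apply: (@leq_ltn_trans (K * L * ((2 * k + 2) ^ (k + d) * (N + 1) ^ (k + d)) * q ^ N * 2 ^ U)).
  have -> : n ^ k * (K * (2 ^ U * q ^ N)) * (L * n ^ d) = K * L * n ^ (k + d) * q ^ N * 2 ^ U.
    have rearrange a b c e f g : a * (f * (c * e)) * (g * b) = f * g * (a * b) * e * c.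
      by ring.
    by rewrite expnD rearrange.
  by rewrite !leq_mul2r leq_mul2l -expnMn leq_exp_base ?orbT.
rewrite mulnC ltn_pmul2l ?expn_gt0 // mulnA; apply: beat; rewrite /N; lia.
Qed.

Import Order.TTheory GRing.Theory Num.Theory.
Local Open Scope ring_scope.

Lemma poly_le_monomial (p : {poly rat}) (x : rat) : 1 <= x ->
  p.[x] <= (\sum_(i < size p) `|p`_i|) * x ^+ size p.
Proof.
move=> x_ge1; rewrite horner_coef.
apply: le_trans (ler_norm _) _; apply: le_trans (ler_norm_sum _ _ _) _.
rewrite big_distrl /=; apply: ler_sum => i _.
rewrite normrM normrX (ger0_norm (le_trans ler01 x_ge1)).
by rewrite ler_wpM2l ?normr_ge0 // ler_weXn2l // ltnW.
Qed.

Lemma rat_le_nat (y : rat) : exists N : nat, y <= N%:R.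
Proof.
exists (Num.Def.archi_bound `|y|); apply: le_trans (ler_norm y) _.
exact/ltW/archi_boundP/normr_ge0.
Qed.

Lemma negligible_ratio (F V : nat -> nat) :
  (forall L d : nat, exists N0, forall n, (N0 <= n)%N -> (F n * (L * n ^ d) < V n)%N) ->
  negligible (fun n => (F n)%:R / (V n)%:R).
Proof.
move=> beats p lc_pos.
have [y p_large] := poly_pinfty_gt_lc lc_pos.
have [Ny le_yNy] := rat_le_nat y.
have [L le_coefs] := rat_le_nat (\sum_(i < size p) `|p`_i|).
have [N0 beatsN0] := beats L (size p).
exists (maxn (maxn Ny 1) N0) => n; rewrite !geq_max => /andP [/andP [le_Nyn n_ge1] le_N0n].
have p_pos : 0 < p.[n%:R].
  by apply: lt_le_trans lc_pos (p_large _ _); rewrite (le_trans le_yNy) // ler_nat.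
have p_le : p.[n%:R] <= L%:R * n%:R ^+ size p.
  apply: le_trans (poly_le_monomial _ _) _; first by rewrite ler1n.
  by rewrite ler_wpM2r // exprn_ge0.
have V_pos : (0 < V n)%N by apply: leq_ltn_trans (beatsN0 n le_N0n).
rewrite ger0_norm ?divr_ge0 // -[X in _ < X]div1r ltr_pdivlMr // mulrAC.
rewrite ltr_pdivrMr ?ltr0n // mul1r.
apply: le_lt_trans (ler_wpM2l (ler0n _ _) p_le) _.
by rewrite -natrX -!natrM ltr_nat beatsN0.
Qed.

Theorem mainTheorem14 (k : nat) (hk : (1 <= k)%N) :
  negligible (prob_fail (good_graph k)).
Proof.
apply: (negligible_ratio
  (F := fun n => #|[set E : {set {set 'I_n}} | is_graph E && ~~ good_graph k E]|)
  (V := fun n => 2 ^ #|pairs n|)%N).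
by move=> L d; apply: fail_beats_monomials.
Qed.
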